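(* Let $R=k[x_1,\dots,x_n]$ be graded by a monoid $P$, let $I\subset R$ be a $P$-homogeneous ideal, and let $\preceq$ be a monomial order. Let $G$ be a group acting on $R$ by permuting variables, acting monomially on $I$ up to degree $d$ and transitively on a set of variables $e_1,\dots,e_m$ (with $\deg(e_i)=\underline e_i\in P$). Let $Q\subseteq\mathrm{in}_{\preceq}(I)$ be a monomial ideal with generators of total degree at most $d$. Suppose: (1) $e_1$ is a nonzerodivisor in $R/Q$; (2) for all $g\in G$, $HS(R/Q,t)=HS(R/g(Q),t)$; (3) for all $D\in P$ there are natural numbers $a_1,\dots,a_m$ such that $\dim_k Q_{D+\sum_ia_i\underline e_i}=\dim_k I_{D+\sum_ia_i\underline e_i}$. Then $Q=\mathrm{in}_{\preceq}(I)$.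
   Context: $R$ is graded by a monoid $P$ such that every monomial is $P$-homogeneous, the $P$-grading refines the standard grading, and each graded piece is finite dimensional. For a $P$-graded module $N$, $HS(N,t)=\sum_{D\in P}\dim_k(N_D)t^D$. For $h\in R$, $\mathrm{mon}(h)$ is the set of monomials of $h$ with nonzero coefficient; $G$ acts monomially on $I$ up to degree $d$ if for every $h\in I$ of standard degree $\le d$ and every $g\in G$ there is $h'\in I$ with $\mathrm{mon}(h')=\mathrm{mon}(g(h))$. *)

From HB Require Import structures.
From mathcomp Require Import all_boot all_order all_algebra all_fingroup.
From mathcomp Require Import mpoly.
Set Implicit Arguments. Unset Strict Implicit. Unset Printing Implicit Defensive.
Import GRing.Theory.
Local Open Scope ring_scope.

Section Defs.
Variables (k : fieldType) (n : nat).
Local Notation R := {mpoly k[n]}.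

Definition is_ideal (I : R -> Prop) : Prop :=
  [/\ I 0, (forall f g, I f -> I g -> I (f + g)) & (forall f g, I g -> I (f * g))].

Definition ideal_gen (S : R -> Prop) : R -> Prop :=
  fun f => forall J, is_ideal J -> (forall x, S x -> J x) -> J f.

Definition monomial_ideal (Gs : 'X_{1..n} -> Prop) : R -> Prop :=
  ideal_gen (fun f => exists m, Gs m /\ f = 'X_[m]).

Definition monomial_order (le : rel 'X_{1..n}) : Prop :=
  [/\ reflexive le, antisymmetric le, transitive le, total le &
      (forall m, le 0%MM m) /\
      (forall m1 m2 m, le m1 m2 -> le (m1 + m)%MM (m2 + m)%MM)].

Definition is_lead (le : rel 'X_{1..n}) (h : R) (m : 'X_{1..n}) : Prop :=
  m \in msupp h /\ forall m', m' \in msupp h -> le m' m.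

Definition initial_ideal (le : rel 'X_{1..n}) (I : R -> Prop) : R -> Prop :=
  ideal_gen (fun f => exists h m, [/\ I h, h != 0, is_lead le h m & f = 'X_[m]]).

Variables (P : nmodType) (degP : 'X_{1..n} -> P).

(* P-grading of R: every monomial is P-homogeneous, degree is a monoid morphism,
   the P-grading refines the standard grading, graded pieces finite dimensional *)
Definition monoid_grading : Prop :=
  [/\ degP 0%MM = 0,
      (forall m1 m2, degP (m1 + m2)%MM = degP m1 + degP m2),
      (forall m1 m2, degP m1 = degP m2 -> mdeg m1 = mdeg m2) &
      (forall D, exists s : seq 'X_{1..n}, forall m, degP m = D -> m \in s)].

Definition is_homogP (D : P) (f : R) : Prop := forall m, m \in msupp f -> degP m = D.

Definition hcomp (D : P) (f : R) : R :=
  \sum_(m <- msupp f | degP m == D) f@_m *: 'X_[m].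

Definition P_homogeneous_ideal (I : R -> Prop) : Prop :=
  is_ideal I /\ forall f D, I f -> I (hcomp D f).

(* dim_k (V / W) >= r : there are r elements of V linearly independent modulo W *)
Definition qdim_ge (V W : R -> Prop) (r : nat) : Prop :=
  exists s : r.-tuple R, (forall i, V (tnth s i)) /\
    forall c : 'I_r -> k, W (\sum_(i < r) c i *: tnth s i) -> forall i, c i = 0.

Definition dim_ge (V : R -> Prop) (r : nat) : Prop := qdim_ge V (fun f => f = 0) r.

(* dim_k I_D = dim_k J_D (the graded pieces are finite dimensional) *)
Definition dim_piece_eq (I J : R -> Prop) (D : P) : Prop :=
  forall r, dim_ge (fun f => is_homogP D f /\ I f) r <-> dim_ge (fun f => is_homogP D f /\ J f) r.

(* HS(R/Q, t) = HS(R/Q', t): dim_k (R/Q)_D = dim_k (R/Q')_D for all D *)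
Definition HS_quot_eq (Q Q' : R -> Prop) : Prop :=
  forall D r, qdim_ge (is_homogP D) Q r <-> qdim_ge (is_homogP D) Q' r.

End Defs.

Definition perm_image (k : fieldType) n (g : 'S_n) (Q : {mpoly k[n]} -> Prop) :=
  fun f => exists q, Q q /\ f = msym g q.

Definition acts_monomially (k : fieldType) n (G : {group 'S_n})
    (I : {mpoly k[n]} -> Prop) (d : nat) : Prop :=
  forall h g, I h -> (msize h <= d.+1)%N -> g \in G ->
    exists h', I h' /\ msupp h' =i msupp (msym g h).

From HB Require Import structures.
From mathcomp Require Import all_boot all_order all_algebra all_fingroup.
From mathcomp Require Import mpoly zify.
From Stdlib Require Import ClassicalEpsilon.
Import Order.TTheory GRing.Theory.
Local Open Scope ring_scope.

Set Implicit Arguments. Unset Strict Implicit. Unset Printing Implicit Defensive.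

(* Q and J = in(I) are monomial ideals with Q included in J, so the theorem is a
   count of monomials. In each P-degree D, dim I_D is the number of monomials of
   degree D in the initial ideal for ANY monomial order, so the deficiency
   delta(D) = #(J \ Q)_D equals dim I_D - dim Q_D. Take g in G. Since G acts
   monomially on I up to degree d and Q is generated in degree <= d, the ideal
   g(Q) lies in the initial ideal J_g of I for the order pulled back along g;
   J_g and g(Q) have the Hilbert functions of J and Q (the latter by (2)), and
   x_(g e_1) is a nonzerodivisor modulo g(Q), so multiplication by x_(g e_1)
   injects (J_g \ g(Q))_D into degree D + deg x_(g e_1). Hence
   delta(D) <= delta(D + deg e_i) for every i by transitivity, and
   delta(D) <= delta(D + sum_i a_i deg e_i) = 0 by (3). *)

Definition asbool (A : Prop) : bool :=
  if excluded_middle_informative A then true else false.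

Lemma asboolP (A : Prop) : reflect A (asbool A).
Proof. by rewrite /asbool; case: excluded_middle_informative => h; constructor. Qed.

Lemma eqn_of_leq_iff (a b : nat) : (forall r, r <= a <-> r <= b)%N -> a = b.
Proof. by move=> h; apply/eqP; rewrite eqn_leq (h a).1 ?(h b).2. Qed.

Lemma count_predD (T : Type) (a b : pred T) s : {subset b <= a} ->
  count (predD a b) s = (count a s - count b s)%N.
Proof.
move=> sba; elim: s => //= x s ->; case bx: (b x).
  by have ax : a x := sba x bx; rewrite ax /=; lia.
have := @sub_count _ b a sba s; case: (a x) => /=; lia.
Qed.

Lemma seq_has_max (T : eqType) (r : rel T) (s : seq T) :
  total r -> transitive r -> s != [::] ->
  exists2 x, x \in s & forall y, y \in s -> r y x.
Proof.
move=> tot tr; elim: s => // a s IH _.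
have raa : r a a by have := tot a a; rewrite orbb.
case: (eqVneq s [::]) => [->|/IH [x xs hx]].
  by exists a => [|y]; rewrite mem_seq1 // => /eqP ->.
case/orP: (tot a x) => hax.
  exists x => [|y]; first by rewrite inE xs orbT.
  by rewrite inE => /orP [/eqP -> //|]; exact: hx.
exists a => [|y]; first by rewrite inE eqxx.
by rewrite inE => /orP [/eqP -> //| /hx ryx]; exact: tr ryx hax.
Qed.

Lemma leq_shift_sum (P : nmodType) (I : finType) (A : {pred I})
    (f : P -> nat) (x : I -> P) (a : I -> nat) :
  (forall i, i \in A -> forall D, f D <= f (D + x i)%R)%N ->
  forall D, (f D <= f (D + \sum_(i in A) x i *+ a i)%R)%N.
Proof.
move=> hx; apply: (big_ind (fun y => forall D, f D <= f (D + y)%R)%N).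
- by move=> D; rewrite addr0.
- by move=> y z hy hz D; rewrite addrA; exact: leq_trans (hy D) (hz _).
move=> i iA; elim: (a i) => [|j IH] D; first by rewrite mulr0n addr0.
by rewrite mulrSr addrA; exact: leq_trans (IH D) (hx i iA _).
Qed.

Section MonomialSpaces.
Variables (k : fieldType) (n : nat).
Local Notation R := {mpoly k[n]}.
Implicit Types (f g h v : R) (m w : 'X_{1..n}).

Definition lin_closed (V : R -> Prop) :=
  forall f g (c : k), V f -> V g -> V (f - c *: g).

Lemma msuppBZ f g (c : k) m :
  m \in msupp (f - c *: g) -> m \in msupp f \/ m \in msupp g.
Proof.
by move/msuppB_le; rewrite mem_cat => /orP [->|/msuppZ_le ->]; [left|right].
Qed.

Definition spanned_by_monomials (W : R -> Prop) (a : pred 'X_{1..n}) :=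
  forall f, W f <-> {subset msupp f <= a}.

Section Spanned.
Variables (W : R -> Prop) (a : pred 'X_{1..n}).
Hypothesis spanW : spanned_by_monomials W a.

Lemma spanned0 : W 0.
Proof. by apply/spanW => m; rewrite msupp0. Qed.

Lemma spanned_lin_closed : lin_closed W.
Proof.
by move=> f g c /spanW Wf /spanW Wg; apply/spanW => m /msuppBZ [/Wf|/Wg].
Qed.

Lemma spannedX m : W 'X_[m] <-> a m.
Proof.
rewrite spanW; split=> [|am m']; first by apply; rewrite msuppX mem_seq1.
by rewrite msuppX mem_seq1 => /eqP ->.
Qed.

End Spanned.

Definition mmultiple (Gs : 'X_{1..n} -> Prop) : pred 'X_{1..n} :=
  fun m => asbool (exists2 q, Gs q & (q <= m)%MM).

Lemma mmultipleP Gs m : reflect (exists2 q, Gs q & (q <= m)%MM) (mmultiple Gs m).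
Proof. exact: asboolP. Qed.

Lemma mmultipleDl Gs w m : mmultiple Gs m -> mmultiple Gs (w + m)%MM.
Proof.
case/mmultipleP=> q Gq qm; apply/mmultipleP; exists q => //.
exact: lepm_trans qm (lem_addl _ _).
Qed.

Lemma monomial_idealP Gs : spanned_by_monomials (monomial_ideal Gs) (mmultiple Gs).
Proof.
move=> f; split=> [Gf|fGs J [J0 JD JM] JGs].
  apply: (Gf (fun f => {subset msupp f <= mmultiple Gs})); last first.
    move=> _ [m [Gm ->]] m'; rewrite msuppX mem_seq1 => /eqP ->.
    by apply/mmultipleP; exists m => //; exact: lepm_refl.
  split=> [m|g h Sg Sh m /msuppD_le|g h Sh m /msuppM_le /allpairsP[[m1 m2]]].
  - by rewrite msupp0.
  - by rewrite mem_cat => /orP [/Sg|/Sh].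
  by case=> /= _ /Sh m2Gs ->; exact: mmultipleDl.
rewrite (mpolyE f) big_seq; apply: (big_ind J) => // m /fGs /mmultipleP [q Gq qm].
rewrite -(submK qm) mpolyXD scalerAl; apply: JM; apply: JGs.
by exists q.
Qed.

Definition lead_monomial (le : rel 'X_{1..n}) (I : R -> Prop) m :=
  exists h, [/\ I h, h != 0 & is_lead le h m].

Lemma initial_idealP le I :
  spanned_by_monomials (initial_ideal le I) (mmultiple (lead_monomial le I)).
Proof.
move=> f; rewrite -monomial_idealP; split=> If J idJ JS; apply: If => // x.
  by case=> h [m [Ih nzh hm ->]]; apply: JS; exists m; split=> //; exists h.
by case=> m [[h [Ih nzh hm]] ->]; apply: JS; exists h, m.
Qed.

End MonomialSpaces.

Section Dimension.
Variables (k : fieldType) (n : nat).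
Local Notation R := {mpoly k[n]}.
Implicit Types (f g h v : R) (m : 'X_{1..n}).

Lemma qdim_ge_elim (V W : R -> Prop) (s : seq 'X_{1..n}) r :
  W 0 -> lin_closed V ->
  (forall v, V v -> ~ W v -> exists2 m, m \in s & m \in msupp v) ->
  qdim_ge V W r.+1 ->
  exists2 u, u \in s & qdim_ge (fun v => V v /\ v@_u = 0) W r.
Proof.
move=> W0 linV Vs [t [Vt indep]]; pose t0 := tnth t ord0.
have t0W : ~ W t0.
  move=> Wt0; have := indep (fun i => if i == ord0 then 1 else 0).
  rewrite big_ord_recl eqxx scale1r big1 ?addr0 => [/(_ Wt0 ord0)|i _].
    by rewrite eqxx => /eqP; rewrite oner_eq0.
  by rewrite eq_sym (negbTE (neq_lift _ _)) scale0r.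
have [u us ut0] := Vs _ (Vt ord0) t0W; exists u => //.
have t0u : t0@_u != 0 by rewrite -mcoeff_msupp.
pose q i := (tnth t (lift ord0 i))@_u / t0@_u.
exists [tuple tnth t (lift ord0 i) - q i *: t0 | i < r]; split=> [i|c Wc i].
  rewrite tnth_mktuple; split; first by apply: linV; apply: Vt.
  by rewrite mcoeffB mcoeffZ divfK // subrr.
(* a relation among the reduced vectors is one among the original ones *)
pose c' j := if unlift ord0 j is Some i then c i else - \sum_(i < r) c i * q i.
have := indep c' _ (lift ord0 i); rewrite /c' liftK; apply.
rewrite big_ord_recl /c' unlift_none; under [X in _ + X]eq_bigr => j _ do rewrite liftK.
rewrite (eq_bigr (fun j => c j *: tnth t (lift ord0 j) - (c j * q j) *: t0)) in Wc.
  by rewrite sumrB -scaler_suml in Wc; rewrite scaleNr addrC.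
by move=> j _; rewrite tnth_mktuple scalerBr scalerA.
Qed.

Lemma qdim_ge_leq_size (V W : R -> Prop) (s : seq 'X_{1..n}) r :
  W 0 -> lin_closed V -> uniq s ->
  (forall v, V v -> ~ W v -> exists2 m, m \in s & m \in msupp v) ->
  qdim_ge V W r -> (r <= size s)%N.
Proof.
move=> W0; elim: r V s => // r IH V s linV us Vs.
case/(qdim_ge_elim W0 linV Vs) => u su /IH ltrs.
suff : (r <= size (rem u s))%N by rewrite size_rem //; case: (s) su.
apply: ltrs => [f g c [Vf f0] [Vg g0]||v [Vv v0] vW].
- split; first by apply: linV.
  by rewrite mcoeffB mcoeffZ f0 g0 mulr0 subr0.
- exact: rem_uniq.
have [m ms mv] := Vs v Vv vW; exists m => //.
rewrite mem_rem_uniq // inE ms andbT; apply: contraTneq mv => ->.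
by rewrite mcoeff_msupp v0 eqxx.
Qed.

Lemma lead_indep (le : rel 'X_{1..n}) (W : R -> Prop) r (t : 'I_r -> R)
    (l : 'I_r -> 'X_{1..n}) :
  antisymmetric le -> transitive le -> total le -> injective l ->
  (forall i, is_lead le (t i) (l i)) ->
  (forall f, W f -> forall i, l i \notin msupp f) ->
  forall c : 'I_r -> k, W (\sum_(i < r) c i *: t i) -> forall i, c i = 0.
Proof.
move=> anti tr tot l_inj tl Wl c Wc i0; apply/eqP/negPn/negP => ci0.
pose S := [seq i <- enum 'I_r | c i != 0].
have S_nz : S != [::].
  apply/eqP => S0; suff : i0 \in S by rewrite S0.
  by rewrite mem_filter ci0 mem_enum.
have [j] := @seq_has_max _ (fun i j => le (l i) (l j)) S (fun i j => tot _ _)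
  (fun y x z => @tr (l y) (l x) (l z)) S_nz.
rewrite mem_filter mem_enum andbT => cj jmax.
case/negP: (Wl _ Wc j); rewrite mcoeff_msupp raddf_sum (bigD1 j) //= big1 ?addr0.
  by rewrite mcoeffZ mulf_neq0 // -mcoeff_msupp; case: (tl j).
move=> i nij; rewrite mcoeffZ; have [->|ci] := eqVneq (c i) 0; first by rewrite mul0r.
have [lji|] := boolP (l j \in msupp (t i)); last first.
  by rewrite mcoeff_msupp negbK => /eqP ->; rewrite mulr0.
suff /l_inj eij : l i = l j by rewrite eij eqxx in nij.
by apply: anti; rewrite (tl i).2 // jmax // mem_filter ci mem_enum.
Qed.

Lemma qdim_ge_of_leads (le : rel 'X_{1..n}) (V W : R -> Prop) (s : seq 'X_{1..n}) r :
  antisymmetric le -> transitive le -> total le -> uniq s -> (r <= size s)%N ->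
  {in s, forall m, exists h, V h /\ is_lead le h m} ->
  (forall f, W f -> {in s, forall m, m \notin msupp f}) ->
  qdim_ge V W r.
Proof.
move=> anti tr tot us rs hs Ws; pose l (i : 'I_r) := nth 0%MM s i.
have ls i : l i \in s by apply: mem_nth; exact: leq_trans (ltn_ord i) rs.
have l_inj : injective l.
  move=> i j /eqP; rewrite nth_uniq ?(leq_trans (ltn_ord _) rs) //.
  by move/eqP/val_inj.
pose t i := proj1_sig (constructive_indefinite_description _ (hs _ (ls i))).
have tP i : V (t i) /\ is_lead le (t i) (l i).
  exact: proj2_sig (constructive_indefinite_description _ (hs _ (ls i))).
exists [tuple t i | i < r]; split=> [i|c]; first by rewrite tnth_mktuple; case: (tP i).
under eq_bigr => i _ do rewrite tnth_mktuple.
apply: (lead_indep anti tr tot l_inj) => [i|f /Ws fs i]; first by case: (tP i).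
exact: fs.
Qed.

End Dimension.

Section Permutation.
Variables (k : fieldType) (n : nat).
Local Notation R := {mpoly k[n]}.
Implicit Types (f h : R) (m : 'X_{1..n}) (g : 'S_n).

Definition mperm g m : 'X_{1..n} := [multinom m (g i) | i < n].

Lemma mpermD g : {morph mperm g : m1 m2 / (m1 + m2)%MM}.
Proof. by move=> m1 m2; apply/mnmP => i; rewrite !mnmE. Qed.

Lemma mperm0 g : mperm g 0%MM = 0%MM.
Proof. by apply/mnmP => i; rewrite !mnmE. Qed.

Lemma mperm_mnm1 g i : mperm g U_(g i)%MM = U_(i)%MM.
Proof. by apply/mnmP => j; rewrite mnmE !mnm1E (inj_eq perm_inj). Qed.

Lemma lem_mperm g m1 m2 : (m1 <= mperm g m2)%MM = (mperm g^-1 m1 <= m2)%MM.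
Proof.
apply/mnm_lepP/mnm_lepP => h i; rewrite mnmE.
  by have := h (g^-1 i)%g; rewrite mnmE permKV.
by have := h (g i); rewrite mnmE permK.
Qed.

Lemma msupp_msym g f m : (m \in msupp (msym g f)) = (mperm g m \in msupp f).
Proof. by rewrite !mcoeff_msupp mcoeff_sym. Qed.

Lemma perm_image_spanned g (W : R -> Prop) (a : pred 'X_{1..n}) :
  spanned_by_monomials W a ->
  spanned_by_monomials (perm_image g W) [pred m | a (mperm g m)].
Proof.
move=> spanW f; split=> [[q [Wq ->]] m|fa].
  by rewrite msupp_msym; apply: (spanW q).1.
exists (msym g^-1 f); split; last by rewrite -msymMm mulVg msym1m.
apply/spanW => m; rewrite msupp_msym => /fa.
by rewrite inE /mperm (mpermK g).
Qed.

Definition le_perm (le : rel 'X_{1..n}) g : rel 'X_{1..n} :=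
  fun m1 m2 => le (mperm g m1) (mperm g m2).

Lemma monomial_order_perm le g :
  monomial_order le -> monomial_order (le_perm le g).
Proof.
case=> lrefl lanti ltr ltot [le0 leD]; split.
- by move=> m; exact: lrefl.
- by move=> m1 m2 /lanti /mperm_inj.
- by move=> m2 m1 m3; exact: ltr.
- by move=> m1 m2; exact: ltot.
split=> [m|m1 m2 m]; first by rewrite /le_perm mperm0.
by rewrite /le_perm !mpermD; exact: leD.
Qed.

Lemma is_lead_msym le g h h' m :
  is_lead le h m -> msupp h' =i msupp (msym g h) ->
  is_lead (le_perm le g) h' (mperm g^-1 m).
Proof.
case=> mh hm eqh'; split=> [|m']; first by rewrite eqh' msupp_msym /mperm (mpermK g).
by rewrite eqh' msupp_msym /le_perm /mperm (mpermK g); exact: hm.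
Qed.

End Permutation.

Section Homogeneous.
Variables (k : fieldType) (n : nat) (P : nmodType) (degP : 'X_{1..n} -> P).
Local Notation R := {mpoly k[n]}.
Implicit Types (f h : R) (m w : 'X_{1..n}) (D : P).

Lemma hcompE D f m : (hcomp degP D f)@_m = if degP m == D then f@_m else 0.
Proof.
rewrite /hcomp raddf_sum /= big_mkcond /=.
under eq_bigr => m' _ do rewrite mcoeffZ mcoeffX.
have [mf|] := boolP (m \in msupp f); last first.
  rewrite mcoeff_msupp negbK => /eqP fm0; rewrite fm0 if_same big1_seq // => m' _.
  by case: (m' =P m) => [->|_]; rewrite ?fm0 ?mul0r ?mulr0 ?if_same.
rewrite (bigD1_seq m) ?msupp_uniq //= eqxx mulr1 big1 ?addr0 // => m' m'm.
by rewrite (negbTE m'm) mulr0 if_same.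
Qed.

Lemma hcomp_homog D f : is_homogP degP D (hcomp degP D f).
Proof. by move=> m; rewrite mcoeff_msupp hcompE; case: ifP => [/eqP|_] //; rewrite eqxx. Qed.

Lemma is_lead_hcomp le h m : is_lead le h m -> is_lead le (hcomp degP (degP m) h) m.
Proof.
case=> mh hm; split=> [|m']; first by rewrite mcoeff_msupp hcompE eqxx -mcoeff_msupp.
rewrite mcoeff_msupp hcompE; case: ifP => _; last by rewrite eqxx.
by rewrite -mcoeff_msupp; exact: hm.
Qed.

Lemma homog_lin_closed D : lin_closed (is_homogP degP D : R -> Prop).
Proof. by move=> f g c hf hg m /msuppBZ [/hf|/hg]. Qed.

Lemma msize_homog m f :
  (forall m1 m2, degP m1 = degP m2 -> mdeg m1 = mdeg m2) ->
  is_homogP degP (degP m) f -> (msize f <= (mdeg m).+1)%N.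
Proof.
move=> deg_refines hf; rewrite msizeE; apply/bigmax_leqP_seq => m' m'f _.
by rewrite (deg_refines _ _ (hf _ m'f)).
Qed.

Lemma is_leadX le m : reflexive le -> is_lead le ('X_[m] : R) m.
Proof.
move=> lrefl; split=> [|m']; first by rewrite msuppX mem_seq1.
by rewrite msuppX mem_seq1 => /eqP ->.
Qed.

Lemma homogX m : is_homogP degP (degP m) ('X_[m] : R).
Proof. by move=> m'; rewrite msuppX mem_seq1 => /eqP ->. Qed.

Lemma exists_lead le f : total le -> transitive le -> f != 0 ->
  exists m, is_lead le f m.
Proof.
move=> tot tr; rewrite -msupp_eq0 => /(seq_has_max tot tr) [m mf hm].
by exists m; split.
Qed.

Lemma msuppXM w f : msupp ('X_[w] * f) =i [seq (w + m)%MM | m <- msupp f].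
Proof. by rewrite mulrC; apply: perm_mem; exact: msuppMX. Qed.

Lemma is_lead_mulX le w f m : monomial_order le -> is_lead le f m ->
  is_lead le ('X_[w] * f) (w + m)%MM.
Proof.
case=> _ _ _ _ [_ leD] [mf hm]; split=> [|m'].
  by rewrite msuppXM; apply/mapP; exists m.
by rewrite msuppXM => /mapP [m'' m''f ->]; rewrite ![(w + _)%MM]addmC; exact/leD/hm.
Qed.

Hypothesis degP_add : {morph degP : m1 m2 / (m1 + m2)%MM >-> m1 + m2}.

Lemma homog_mulX w D f :
  is_homogP degP D f -> is_homogP degP (degP w + D) ('X_[w] * f).
Proof. by move=> hf m; rewrite msuppXM => /mapP [m' m'f ->]; rewrite degP_add (hf _ m'f). Qed.

Lemma ideal_lin_closed (I : R -> Prop) : is_ideal I -> lin_closed I.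
Proof.
by case=> _ ID IM f g c If Ig; rewrite -mul_mpolyC -mulNr; exact/ID/IM.
Qed.

Lemma homog_lead_witness le (I : R -> Prop) m :
  monomial_order le -> P_homogeneous_ideal degP I ->
  mmultiple (lead_monomial le I) m ->
  exists h, (is_homogP degP (degP m) h /\ I h) /\ is_lead le h m.
Proof.
move=> mo [[_ _ IM] Ihcomp] /mmultipleP [m0 [h [Ih _ hm0]] m0m].
exists ('X_[m - m0] * hcomp degP (degP m0) h); split; first split.
- by rewrite -{1}(submK m0m) degP_add; exact/homog_mulX/hcomp_homog.
- exact/IM/Ihcomp.
by rewrite -{2}(submK m0m); exact/is_lead_mulX/is_lead_hcomp.
Qed.

End Homogeneous.

Section GradedDimension.
Variables (k : fieldType) (n : nat) (P : nmodType) (degP : 'X_{1..n} -> P).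
Variables (D : P) (L : seq 'X_{1..n}).
Hypothesis L_uniq : uniq L.
Hypothesis mem_L : forall m, (m \in L) = (degP m == D).
Local Notation R := {mpoly k[n]}.

Lemma mem_filter_L (a : pred 'X_{1..n}) m : (m \in filter a L) = a m && (degP m == D).
Proof. by rewrite mem_filter mem_L. Qed.

Lemma dim_spanned (W : R -> Prop) a : spanned_by_monomials W a ->
  forall r, dim_ge (fun f => is_homogP degP D f /\ W f) r <-> (r <= count a L)%N.
Proof.
move=> spanW r; rewrite -size_filter; split.
  apply: qdim_ge_leq_size => [||//|v [hv Wv] /eqP v0].
  - by [].
  - move=> f g c [hf Wf] [hg Wg].
    by split; [exact: homog_lin_closed | exact: spanned_lin_closed spanW _ _ _ Wf Wg].
  - exact: filter_uniq.
  have [m [mv _]] := exists_lead le_total (@le_trans _ 'X_{1..n}) v0.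
  by exists m; rewrite // mem_filter_L (hv _ mv) eqxx andbT; apply: (spanW v).1.
move=> rs; apply: (qdim_ge_of_leads le_anti le_trans le_total _ rs) => [|m|f -> m _].
- exact: filter_uniq.
- rewrite mem_filter_L => /andP [am /eqP <-]; exists 'X_[m].
  by split; [split; [exact: homogX | exact/(spannedX spanW)] | exact/is_leadX/le_refl].
by rewrite msupp0.
Qed.

Lemma codim_spanned (W : R -> Prop) a : spanned_by_monomials W a ->
  forall r, qdim_ge (is_homogP degP D) W r <-> (r <= count (predC a) L)%N.
Proof.
move=> spanW r; rewrite -size_filter; split.
  apply: qdim_ge_leq_size => [||//|v hv vW].
  - exact: spanned0 spanW.
  - exact: homog_lin_closed.
  - exact: filter_uniq.
  have /hasP [m mv am] : has (predC a) (msupp v).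
    by rewrite has_predC; apply/negP => /allP /spanW.
  by exists m; rewrite // mem_filter_L am (hv _ mv) eqxx.
move=> rs; apply: (qdim_ge_of_leads le_anti le_trans le_total _ rs) => [|m|f /spanW fa m].
- exact: filter_uniq.
- rewrite mem_filter_L => /andP [_ /eqP <-]; exists 'X_[m].
  by split; [exact: homogX | exact/is_leadX/le_refl].
by rewrite mem_filter_L => /andP [am _]; apply: contra am => /fa.
Qed.

Lemma dim_homog_ideal le (I : R -> Prop) :
  {morph degP : m1 m2 / (m1 + m2)%MM >-> m1 + m2} ->
  monomial_order le -> P_homogeneous_ideal degP I ->
  forall r, dim_ge (fun f => is_homogP degP D f /\ I f) r <->
            (r <= count (mmultiple (lead_monomial le I)) L)%N.
Proof.
move=> degP_add mo homI r; have [lrefl lanti ltr ltot _] := mo.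
rewrite -size_filter; split.
  apply: qdim_ge_leq_size => [||//|v [hv Iv] /eqP v0].
  - by [].
  - move=> f g c [hf If] [hg Ig].
    by split; [exact: homog_lin_closed | exact: ideal_lin_closed homI.1 _ _ _ If Ig].
  - exact: filter_uniq.
  have [m [mv hm]] := exists_lead ltot ltr v0.
  exists m; rewrite // mem_filter_L (hv _ mv) eqxx andbT.
  by apply/mmultipleP; exists m; [exists v | exact: lepm_refl].
move=> rs; apply: (qdim_ge_of_leads lanti ltr ltot _ rs) => [|m|f -> m _].
- exact: filter_uniq.
- by rewrite mem_filter_L => /andP [Jm /eqP <-]; exact: homog_lead_witness.
by rewrite msupp0.
Qed.

End GradedDimension.

Section Deficiency.
Variables (n : nat) (P : nmodType) (degP : 'X_{1..n} -> P) (L : P -> seq 'X_{1..n}).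
Hypothesis degP_add : {morph degP : m1 m2 / (m1 + m2)%MM >-> m1 + m2}.
Hypothesis L_uniq : forall D, uniq (L D).
Hypothesis mem_L : forall D m, (m \in L D) = (degP m == D).

Lemma count_predD_shift (a b : pred 'X_{1..n}) w D :
  (forall m, a m -> a (w + m)%MM) -> (forall m, b (w + m)%MM -> b m) ->
  (count (predD a b) (L D) <= count (predD a b) (L (D + degP w)))%N.
Proof.
move=> aw bw; rewrite -!size_filter -(size_map (fun m => w + m)%MM).
apply: uniq_leq_size => [|x /mapP [m]].
  by rewrite map_inj_uniq ?filter_uniq // => m1 m2 /addmI.
rewrite !mem_filter mem_L /= => /andP [/andP [bm am] /eqP <-] ->.
rewrite mem_L degP_add addrC eqxx andbT (aw _ am) andbT.
by apply: contra bm; exact: bw.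
Qed.

End Deficiency.

Section InitialIdeal.
Variables (k : fieldType) (n : nat) (P : nmodType) (degP : 'X_{1..n} -> P).
Variables (I : {mpoly k[n]} -> Prop) (le : rel 'X_{1..n}) (G : {group 'S_n}).
Variables (d : nat) (E : {set 'I_n}) (e1 : 'I_n) (Qgens : 'X_{1..n} -> Prop).
Variable L : P -> seq 'X_{1..n}.
Local Notation Q := (@monomial_ideal k n Qgens).
Local Notation aQ := (mmultiple Qgens).
Local Notation aJ le := (mmultiple (lead_monomial le I)).

Hypothesis degP_add : {morph degP : m1 m2 / (m1 + m2)%MM >-> m1 + m2}.
Hypothesis degP_mdeg : forall m1 m2, degP m1 = degP m2 -> mdeg m1 = mdeg m2.
Hypothesis L_uniq : forall D, uniq (L D).
Hypothesis mem_L : forall D m, (m \in L D) = (degP m == D).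
Hypothesis homI : P_homogeneous_ideal degP I.
Hypothesis mo : monomial_order le.
Hypothesis monoG : acts_monomially G I d.
Hypothesis e1E : e1 \in E.
Hypothesis transE : [transitive G, on E | 'P].
Hypothesis Qgens_deg : forall m, Qgens m -> (mdeg m <= d)%N.
Hypothesis Q_initial : forall f, Q f -> initial_ideal le I f.
Hypothesis e1_nzd : forall f, Q ('X_e1 * f) -> Q f.
Hypothesis HS_perm : forall g, g \in G -> HS_quot_eq degP Q (perm_image g Q).
Hypothesis dim_eq : forall D, exists a : 'I_n -> nat,
  dim_piece_eq degP Q I (D + \sum_(i in E) degP U_(i)%MM *+ a i).

Lemma aQ_sub_aJ : {subset aQ <= aJ le}.
Proof.
by move=> m /(spannedX (monomial_idealP _)) /Q_initial /(spannedX (initial_idealP _ _)).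
Qed.

Lemma aQ_nzd m : aQ (U_(e1) + m)%MM -> aQ m.
Proof.
rewrite -!(spannedX (monomial_idealP _)) mpolyXD; exact: e1_nzd.
Qed.

Lemma lead_monomial_perm g m : g \in G -> lead_monomial le I m -> (mdeg m <= d)%N ->
  lead_monomial (le_perm le g) I (mperm g^-1 m).
Proof.
move=> gG [h [Ih _ hm]] md; pose h1 := hcomp degP (degP m) h.
have h1_size : (msize h1 <= d.+1)%N.
  exact: leq_trans (msize_homog degP_mdeg (hcomp_homog (D := degP m) (f := h))) _.
have [h' [Ih' supp_h']] := monoG (homI.2 _ _ Ih) h1_size gG.
have h'm := is_lead_msym (is_lead_hcomp degP hm) supp_h'.
exists h'; split=> //; apply: contraTneq h'm.1 => ->.
by rewrite msupp0.
Qed.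

Lemma perm_aQ_sub_aJ g : g \in G ->
  {subset [pred m | aQ (mperm g m)] <= aJ (le_perm le g)}.
Proof.
move=> gG m /[dup] /mmultipleP [q Qq qm] /aQ_sub_aJ _.
have /mmultipleP [m0 Jm0 m0q] := aQ_sub_aJ (introT (mmultipleP _ _) (ex_intro2 _ _ q Qq (lepm_refl q))).
apply/mmultipleP; exists (mperm g^-1 m0).
  apply: lead_monomial_perm => //; apply: leq_trans (Qgens_deg Qq).
  exact/lemc_mdeg/lem_leo.
by rewrite -lem_mperm; exact: lepm_trans m0q qm.
Qed.

Lemma count_aJ_perm g D : count (aJ (le_perm le g)) (L D) = count (aJ le) (L D).
Proof.
apply: eqn_of_leq_iff => r.
rewrite -(dim_homog_ideal (L_uniq D) (mem_L D) degP_add (monomial_order_perm g mo) homI).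
by rewrite -(dim_homog_ideal (L_uniq D) (mem_L D) degP_add mo homI).
Qed.

Lemma count_aQ_perm g D : g \in G ->
  count [pred m | aQ (mperm g m)] (L D) = count aQ (L D).
Proof.
move=> gG; have := count_predC aQ (L D); rewrite -(count_predC [pred m | aQ (mperm g m)]).
suff -> : count (predC [pred m | aQ (mperm g m)]) (L D) = count (predC aQ) (L D).
  by move/addIn.
apply: eqn_of_leq_iff => r.
rewrite -(codim_spanned (L_uniq D) (mem_L D) (perm_image_spanned g (monomial_idealP Qgens))).
rewrite -(codim_spanned (L_uniq D) (mem_L D) (monomial_idealP Qgens)).
exact: iff_sym (HS_perm gG D r).
Qed.

Lemma deficiency_shift i D : i \in E ->
  (count (predD (aJ le) aQ) (L D) <= count (predD (aJ le) aQ) (L (D + degP U_(i))))%N.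
Proof.
rewrite -(atransP transE e1 e1E) => /orbitP [g gG <-] /=.
rewrite !count_predD; try exact: aQ_sub_aJ.
rewrite -!(count_aJ_perm g) -!(count_aQ_perm _ gG) -!count_predD; try exact: perm_aQ_sub_aJ.
apply: (count_predD_shift degP_add L_uniq mem_L) => m; first exact: mmultipleDl.
by rewrite /= mpermD mperm_mnm1; exact: aQ_nzd.
Qed.

Lemma deficiency_eq0 D : count (predD (aJ le) aQ) (L D) = 0%N.
Proof.
have [a QI] := dim_eq D; set D' := (D + _)%R in QI.
suff : count (predD (aJ le) aQ) (L D') = 0%N.
  have := @leq_shift_sum P _ E (fun D => count (predD (aJ le) aQ) (L D))
    (fun i => degP U_(i)%MM) a (fun i iE D => deficiency_shift D iE) D.
  by rewrite -/D' => /[swap] ->; rewrite leqn0 => /eqP.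
rewrite count_predD; last exact: aQ_sub_aJ.
suff -> : count (aJ le) (L D') = count aQ (L D') by rewrite subnn.
apply: eqn_of_leq_iff => r.
rewrite -(dim_homog_ideal (L_uniq D') (mem_L D') degP_add mo homI).
by rewrite -(dim_spanned (L_uniq D') (mem_L D') (monomial_idealP Qgens)); exact: iff_sym.
Qed.

Lemma initial_ideal_sub f : initial_ideal le I f -> Q f.
Proof.
move/(initial_idealP _ _ f) => fJ; apply/(monomial_idealP _ f) => m mf.
apply/negPn/negP => mQ.
suff : (0 < count (predD (aJ le) aQ) (L (degP m)))%N by rewrite deficiency_eq0.
by rewrite -has_count; apply/hasP; exists m; rewrite ?mem_L //= mQ; exact: fJ.
Qed.

End InitialIdeal.

Lemma graded_pieces_enum n (P : nmodType) (degP : 'X_{1..n} -> P) :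
  (forall D, exists s : seq 'X_{1..n}, forall m, degP m = D -> m \in s) ->
  exists L : P -> seq 'X_{1..n},
    (forall D, uniq (L D)) /\ forall D m, (m \in L D) = (degP m == D).
Proof.
move=> fin_pieces.
have enum D : exists s : seq 'X_{1..n}, uniq s /\ forall m, (m \in s) = (degP m == D).
  have [s sD] := fin_pieces D; exists [seq m <- undup s | degP m == D].
  split=> [|m]; first by rewrite filter_uniq ?undup_uniq.
  by rewrite mem_filter mem_undup andb_idr // => /eqP /sD.
pose L D := proj1_sig (constructive_indefinite_description _ (enum D)).
have LP D : uniq (L D) /\ forall m, (m \in L D) = (degP m == D).
  exact: proj2_sig (constructive_indefinite_description _ (enum D)).
by exists L; split=> D; case: (LP D).
Qed.

Theorem mainTheorem16 (k : fieldType) (n : nat) (P : nmodType)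
    (degP : 'X_{1..n} -> P) (I : {mpoly k[n]} -> Prop)
    (le : rel 'X_{1..n}) (G : {group 'S_n}) (d : nat)
    (E : {set 'I_n}) (e1 : 'I_n) (Qgens : 'X_{1..n} -> Prop) :
  let Q := @monomial_ideal k n Qgens in
  monoid_grading degP ->
  P_homogeneous_ideal degP I ->
  monomial_order le ->
  acts_monomially G I d ->
  e1 \in E ->
  [transitive G, on E | 'P] ->
  (forall m, Qgens m -> (mdeg m <= d)%N) ->
  (forall f, Q f -> initial_ideal le I f) ->
  (* (1) e_1 is a nonzerodivisor on R/Q *)
  (forall f, Q ('X_e1 * f) -> Q f) ->
  (* (2) *)
  (forall g, g \in G ->
     HS_quot_eq degP (Q) (perm_image g (Q))) ->
  (* (3) *)
  (forall D : P, exists a : 'I_n -> nat,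
     dim_piece_eq degP (Q) I
       (D + \sum_(i in E) degP (mnm1 i) *+ a i)) ->
  forall f, Q f <-> initial_ideal le I f.
Proof.
move=> Q [_ degP_add degP_mdeg fin_pieces] homI mo monoG e1E transE Qgens_deg.
move=> Q_initial e1_nzd HS_perm dim_eq f.
have [L [L_uniq mem_L]] := graded_pieces_enum fin_pieces.
split; first exact: Q_initial.
exact: (initial_ideal_sub degP_add degP_mdeg L_uniq mem_L homI mo monoG e1E transE
  Qgens_deg Q_initial e1_nzd HS_perm dim_eq).
Qed.
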